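(* For all $n,k\in\mathbb{N}$ with $k\ge1$ and $n\ge k+2$, we have $\tau_{n,k}^2<\delta_{n,k}^2=A_{n,k}B_{n,k}$, where $$A_{n,k}\le\frac12\,\frac{(2k)!}{k^{2k}},\qquad B_{n,k}=\frac{n+k}{n}\,\frac{n^{2k}(n-k)!}{(n+k)!}.$$
   Context: $T_n$ denotes the Chebyshev polynomial of the first kind of degree $n$, $T_n(\cos\theta)=\cos n\theta$. For integers $n\ge k+2$, $k\ge 1$, let $\omega_{n,k}$ be the rightmost (largest) zero of $T_n^{(k+1)}$ and define $\tau_{n,k}:=|T_n^{(k)}(\omega_{n,k})|/T_n^{(k)}(1)$. Let $S_n(x):=\frac1n\sqrt{1-x^2}\,T_n'(x)$ and $D_{n,k}(x):=\big([T_n^{(k)}(x)]^2+[S_n^{(k)}(x)]^2\big)^{1/2}$ for $x\in(-1,1)$. With $x_k:=(1-k^2/n^2)^{1/2}$, set $\delta_{n,k}:=D_{n,k}(x_k)/T_n^{(k)}(1)$. Further, $A_{n,k}:=\frac{((2k-1)!!)^2}{k^{2k}}\sum_{m=0}^{k-1}\frac{c_{m,k}}{k^{2m}}\frac{n^{2m}}{(n^2-1^2)\cdots(n^2-m^2)}$ and $B_{n,k}:=\frac{n^{2k}}{n^2(n^2-1^2)\cdots(n^2-(k-1)^2)}$, where $c_{0,k}=1$, $c_{m,k}=\binom{k-1+m}{2m}((2m-1)!!)^2$ for $m\ge1$, and the empty product is $1$. *)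

From Stdlib Require Import Reals.
From Coquelicot Require Import Coquelicot.
Open Scope R_scope.

(* Chebyshev polynomial of the first kind, as a real function:
   T_0 = 1, T_1 = x, T_{n+2} = 2 x T_{n+1} - T_n  (so T_n(cos t) = cos(n t)). *)
Fixpoint cheb (n : nat) (x : R) : R :=
  match n with
  | O => 1
  | S O => x
  | S ((S m) as p) => 2 * x * cheb p x - cheb m x
  end.

Definition chebD (n k : nat) (x : R) : R := Derive_n (cheb n) k x.

Definition chebS (n : nat) (x : R) : R :=
  / INR n * sqrt (1 - x ^ 2) * Derive (cheb n) x.

Definition chebDD (n k : nat) (x : R) : R :=
  sqrt ((chebD n k x) ^ 2 + (Derive_n (chebS n) k x) ^ 2).

Definition xk (n k : nat) : R := sqrt (1 - (INR k) ^ 2 / (INR n) ^ 2).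

Definition delta (n k : nat) : R := chebDD n k (xk n k) / chebD n k 1.

Definition is_rightmost_zero (n k : nat) (w : R) : Prop :=
  chebD n (S k) w = 0 /\ (forall y, chebD n (S k) y = 0 -> y <= w).

Definition tau (n k : nat) (w : R) : R := Rabs (chebD n k w) / chebD n k 1.

(* sum_{i=0}^{m-1} f i  and  prod_{j=1}^{m} f j  (empty product = 1) *)
Fixpoint sumR (f : nat -> R) (m : nat) : R :=
  match m with O => 0 | S p => sumR f p + f p end.
Fixpoint prodR1 (f : nat -> R) (m : nat) : R :=
  match m with O => 1 | S p => prodR1 f p * f (S p) end.

(* (2m-1)!! = 1 * 3 * ... * (2m-1), with (-1)!! = 1 *)
Definition oddfact (m : nat) : R := prodR1 (fun i => 2 * INR i - 1) m.

Definition cmk (m k : nat) : R :=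
  match m with
  | O => 1
  | _ => Binomial.C (k - 1 + m) (2 * m) * (oddfact m) ^ 2
  end.

Definition Ank (n k : nat) : R :=
  (oddfact k) ^ 2 / (INR k) ^ (2 * k) *
  sumR (fun m => cmk m k / (INR k) ^ (2 * m) *
                 ((INR n) ^ (2 * m) /
                  prodR1 (fun j => (INR n) ^ 2 - (INR j) ^ 2) m)) k.

Definition Bnk (n k : nat) : R :=
  (INR n) ^ (2 * k) /
  ((INR n) ^ 2 * prodR1 (fun j => (INR n) ^ 2 - (INR j) ^ 2) (k - 1)).

From Stdlib Require Import Reals Lra Lia Psatz.
From Coquelicot Require Import Coquelicot.
Open Scope R_scope.

(* The k-th derivatives of T_n and of S_n both solve
     (1 - x^2) y'' - (2k+1) x y' + (n^2 - k^2) y = 0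
   on (-1, 1), the Chebyshev equation differentiated k times.  Hence the energy
   E_k = (T_n^(k))^2 + (S_n^(k))^2 obeys a recurrence giving E_{k+1} in terms of E_k, E_k', E_k'',
   starting from E_0 = 1: E_k is a polynomial in 1/(1-x^2) with explicit nonnegative coefficients,
   hence increasing in |x|.  Evaluated at x_k it gives delta^2 = A B.  For n = k we have x_k = 0
   and E_k(0) = (T_k^(k))^2, so A_{k,k} B_{k,k} = 1, which bounds A_{n,k} since A decreases in n.
   Finally tau^2 <= E_k(omega) / T_n^(k)(1)^2, so tau < delta follows from 0 <= omega < x_k.
   This is a Sonin-type argument for y = T_n^(k+1): if omega >= x_k, then
   phi = (1-x^2)^(k/2) ((1-x^2) y' - (k+1) x y) increases on (omega, 1) and vanishes at 1, so it is
   negative there; but phi / sqrt(1-x^2) is the derivative of (1-x^2)^((k+1)/2) y, which vanishes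
   at omega and is positive to its right. *)

Lemma nat_ind2 (P : nat -> Prop) :
  P O -> P 1%nat -> (forall m, P m -> P (S m) -> P (S (S m))) -> forall n, P n.
Proof.
  intros H0 H1 HS n. enough (P n /\ P (S n)) by tauto.
  induction n as [|n [IH1 IH2]]; split; auto.
Qed.

Lemma is_derive_Rplus (f g : R -> R) (x a b : R) :
  is_derive f x a -> is_derive g x b -> is_derive (fun t => f t + g t) x (a + b).
Proof. intros Ha Hb. exact (is_derive_plus f g x a b Ha Hb). Qed.

Lemma is_derive_Rminus (f g : R -> R) (x a b : R) :
  is_derive f x a -> is_derive g x b -> is_derive (fun t => f t - g t) x (a - b).
Proof. intros Ha Hb. exact (is_derive_minus f g x a b Ha Hb). Qed.

Lemma is_derive_Rscal (f : R -> R) (c x a : R) :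
  is_derive f x a -> is_derive (fun t => c * f t) x (c * a).
Proof. intro Ha. exact (is_derive_scal f x c a Ha). Qed.

Lemma is_derive_Rmult (f g : R -> R) (x a b : R) :
  is_derive f x a -> is_derive g x b -> is_derive (fun t => f t * g t) x (a * g x + f x * b).
Proof. intros Ha Hb. apply (is_derive_mult f g x a b Ha Hb). intros; apply Rmult_comm. Qed.

Lemma is_derive_Rext (f g : R -> R) (x a : R) :
  (forall t, f t = g t) -> is_derive f x a -> is_derive g x a.
Proof. apply is_derive_ext. Qed.

Lemma is_derive_eq (f : R -> R) (x a b : R) : is_derive f x a -> a = b -> is_derive f x b.
Proof. now intros H <-. Qed.

Lemma is_derive_c_minus_sq_mult (f : R -> R) (c x a : R) :
  is_derive f x a -> is_derive (fun t => (c - t ^ 2) * f t) x (-2 * x * f x + (c - x ^ 2) * a).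
Proof.
  intro Ha.
  assert (Hw : is_derive (fun t => c - t ^ 2) x (-2 * x)) by (auto_derive; [easy | ring]).
  exact (is_derive_Rmult _ _ x _ _ Hw Ha).
Qed.

Lemma locally_open_interval (P : R -> Prop) (a b x : R) :
  a < x < b -> (forall y, a < y < b -> P y) -> locally x P.
Proof.
  intros Hx HP. apply (locally_interval P x a b); simpl; try lra.
  intros y H1 H2; apply HP; simpl in *; lra.
Qed.

Lemma ex_derive_ext_on_interval (f g : R -> R) (a b x : R) :
  a < x < b -> (forall y, a < y < b -> f y = g y) -> ex_derive f x -> ex_derive g x.
Proof. intros Hx Hfg. apply ex_derive_ext_loc, (locally_open_interval _ a b x Hx Hfg). Qed.

Lemma is_derive_eq_on_interval (F G : R -> R) (a b x l m : R) :
  a < x < b -> (forall y, a < y < b -> F y = G y) ->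
  is_derive F x l -> is_derive G x m -> l = m.
Proof.
  intros Hx HFG HF HG.
  apply (is_derive_ext_loc F G) in HF; [|exact (locally_open_interval _ a b x Hx HFG)].
  now rewrite <- (is_derive_unique G x l HF), <- (is_derive_unique G x m HG).
Qed.

Lemma derivatives_eq_on_interval (F G F1 G1 : R -> R) (a b x F2 G2 : R) :
  a < x < b -> (forall y, a < y < b -> F y = G y) ->
  (forall y, a < y < b -> is_derive F y (F1 y)) ->
  (forall y, a < y < b -> is_derive G y (G1 y)) ->
  is_derive F1 x F2 -> is_derive G1 x G2 -> F1 x = G1 x /\ F2 = G2.
Proof.
  intros Hx HFG HF HG HF1 HG1.
  assert (H1 : forall y, a < y < b -> F1 y = G1 y) by
    (intros y Hy; exact (is_derive_eq_on_interval F G a b y _ _ Hy HFG (HF y Hy) (HG y Hy))).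
  split; [exact (H1 x Hx) | exact (is_derive_eq_on_interval F1 G1 a b x _ _ Hx H1 HF1 HG1)].
Qed.

Lemma sumR_ext (f g : nat -> R) N : (forall m, (m < N)%nat -> f m = g m) -> sumR f N = sumR g N.
Proof. induction N; intro H; simpl; auto. rewrite IHN, H; auto. Qed.

Lemma sumR_first (f : nat -> R) N : sumR f (S N) = f O + sumR (fun m => f (S m)) N.
Proof. induction N; simpl in *; [ring|]. rewrite IHN. ring. Qed.

Lemma sumR_plus (f g : nat -> R) N : sumR (fun m => f m + g m) N = sumR f N + sumR g N.
Proof. induction N; simpl; [ring|]. rewrite IHN. ring. Qed.

Lemma sumR_scal (c : R) (f : nat -> R) N : sumR (fun m => c * f m) N = c * sumR f N.
Proof. induction N; simpl; [ring|]. rewrite IHN. ring. Qed.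

Lemma sumR_le (f g : nat -> R) N : (forall m, (m < N)%nat -> f m <= g m) -> sumR f N <= sumR g N.
Proof. induction N; intro H; simpl; [lra|]. apply Rplus_le_compat; auto. Qed.

Lemma is_derive_sumR (f : nat -> R -> R) (df : nat -> R) N (x : R) :
  (forall m, is_derive (f m) x (df m)) -> is_derive (fun y => sumR (fun m => f m y) N) x (sumR df N).
Proof.
  intro H. induction N; simpl.
  - auto_derive; easy.
  - apply is_derive_Rplus; auto.
Qed.

Lemma pow_lt_compat (a b : R) p : 0 <= a < b -> (1 <= p)%nat -> a ^ p < b ^ p.
Proof.
  intros Hab Hp. induction p as [|p IH]; [lia|]. destruct p as [|p]; [simpl; lra|].
  assert (a ^ S p < b ^ S p) by (apply IH; lia). pose proof (pow_le a (S p) ltac:(lra)).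
  simpl in *. nra.
Qed.

Lemma sq_ratio_pow (a b : R) k m : b <> 0 ->
  (a ^ 2 / b ^ 2) ^ (k + m) = a ^ (2 * k) / b ^ (2 * k) * (a ^ (2 * m) / b ^ (2 * m)).
Proof.
  intro Hb. rewrite !pow_mult. unfold Rdiv. rewrite Rpow_mult_distr, !pow_add, ?pow_inv.
  field. split; apply pow_nonzero, pow_nonzero, Hb.
Qed.

(** * Chebyshev polynomials and their derivatives *)

(* Differentiating T_{n+2} = 2 x T_{n+1} - T_n k times by Leibniz' rule. *)
Fixpoint cheb_deriv (n k : nat) (x : R) : R :=
  match n with
  | O => match k with O => 1 | _ => 0 end
  | S O => match k with O => x | S O => 1 | _ => 0 end
  | S ((S m) as p) =>
      2 * x * cheb_deriv p k x + 2 * INR k * cheb_deriv p (pred k) x - cheb_deriv m k x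
  end.

Lemma cheb_deriv_SS m k x : cheb_deriv (S (S m)) k x =
  2 * x * cheb_deriv (S m) k x + 2 * INR k * cheb_deriv (S m) (pred k) x - cheb_deriv m k x.
Proof. reflexivity. Qed.

Lemma cheb_deriv_0 n x : cheb_deriv n 0 x = cheb n x.
Proof.
  induction n as [| |n IH0 IH1] using nat_ind2; [reflexivity | reflexivity |].
  rewrite cheb_deriv_SS, IH0, IH1. simpl. ring.
Qed.

Lemma is_derive_cheb_deriv n k x : is_derive (cheb_deriv n k) x (cheb_deriv n (S k) x).
Proof.
  revert k. induction n as [| |n IH0 IH1] using nat_ind2; intro k.
  - destruct k; simpl; auto_derive; easy.
  - destruct k as [|[|k]]; simpl; auto_derive; easy.
  - apply (is_derive_Rext (fun t => 2 * t * cheb_deriv (S n) k t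
        + 2 * INR k * cheb_deriv (S n) (pred k) t - cheb_deriv n k t));
      [intro; symmetry; apply cheb_deriv_SS|].
    eapply is_derive_eq.
    + apply is_derive_Rminus; [apply is_derive_Rplus|apply IH0].
      * apply is_derive_Rmult; [auto_derive; easy | apply IH1].
      * apply is_derive_Rscal, IH1.
    + rewrite cheb_deriv_SS, S_INR. destruct k; simpl; ring.
Qed.

Lemma chebD_cheb_deriv n k x : chebD n k x = cheb_deriv n k x.
Proof.
  unfold chebD. revert x. induction k as [|k IH]; intro x.
  - symmetry. apply cheb_deriv_0.
  - simpl. rewrite (Derive_ext _ (cheb_deriv n k) x IH).
    apply is_derive_unique, is_derive_cheb_deriv.
Qed.

Lemma cheb_deriv_gt n k x : (n < k)%nat -> cheb_deriv n k x = 0.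
Proof.
  revert k. induction n as [| |n IH0 IH1] using nat_ind2; intros k Hk.
  - destruct k; [lia | reflexivity].
  - destruct k as [|[|k]]; [lia | lia | reflexivity].
  - destruct k as [|k]; [lia|].
    rewrite cheb_deriv_SS, IH1, IH1, IH0 by lia. ring.
Qed.

Lemma cheb_deriv_diag_const n x y : cheb_deriv n n x = cheb_deriv n n y.
Proof.
  induction n as [| |n IH0 IH1] using nat_ind2; [reflexivity | reflexivity |].
  rewrite !cheb_deriv_SS. cbn [Nat.pred].
  rewrite !(cheb_deriv_gt (S n) (S (S n))), !(cheb_deriv_gt n (S (S n))), IH1 by lia. ring.
Qed.

Lemma cheb_deriv_opp n k x : cheb_deriv n k (- x) = (-1) ^ (n + k) * cheb_deriv n k x.
Proof.
  revert k. induction n as [| |n IH0 IH1] using nat_ind2; intro k.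
  - destruct k; simpl; ring.
  - destruct k as [|[|k]]; simpl; ring.
  - rewrite !cheb_deriv_SS, !IH1, IH0. destruct k as [|k]; cbn [Nat.pred].
    + replace (S (S n) + 0)%nat with (S (S (n + 0))) by lia.
      replace (S n + 0)%nat with (S (n + 0)) by lia. simpl. ring.
    + replace (S (S n) + S k)%nat with (S (S (n + S k))) by lia.
      replace (S n + S k)%nat with (S (n + S k)) by lia.
      replace (S n + k)%nat with (n + S k)%nat by lia. simpl. ring.
Qed.

Lemma cheb_at_1 n : cheb n 1 = 1.
Proof.
  induction n as [| |n IH0 IH1] using nat_ind2; [reflexivity | reflexivity |].
  change (cheb (S (S n)) 1) with (2 * 1 * cheb (S n) 1 - cheb n 1). rewrite IH0, IH1. ring.
Qed.

Lemma cheb_deriv_1_succ n x :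
  (1 - x ^ 2) * cheb_deriv (S n) 1 x = INR (S n) * (cheb n x - x * cheb (S n) x).
Proof.
  rewrite <- !cheb_deriv_0.
  induction n as [| |n IH0 IH1] using nat_ind2; [simpl; ring | simpl; ring |].
  transitivity (2 * (1 - x ^ 2) * cheb_deriv (S (S n)) 0 x
                + 2 * x * ((1 - x ^ 2) * cheb_deriv (S (S n)) 1 x)
                - (1 - x ^ 2) * cheb_deriv (S n) 1 x).
  { rewrite (cheb_deriv_SS (S n) 1). cbn [Nat.pred]. simpl INR. ring. }
  rewrite IH0, IH1, (cheb_deriv_SS (S n) 0), (cheb_deriv_SS n 0), !S_INR. simpl INR. ring.
Qed.

Lemma cheb_equation n x :
  (1 - x ^ 2) * cheb_deriv n 2 x - x * cheb_deriv n 1 x + INR n ^ 2 * cheb_deriv n 0 x = 0.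
Proof.
  induction n as [| |n IH0 IH1] using nat_ind2; [simpl; ring | simpl; ring |].
  transitivity (2 * x * ((1 - x ^ 2) * cheb_deriv (S n) 2 x - x * cheb_deriv (S n) 1 x
                         + INR (S n) ^ 2 * cheb_deriv (S n) 0 x)
    - ((1 - x ^ 2) * cheb_deriv n 2 x - x * cheb_deriv n 1 x + INR n ^ 2 * cheb_deriv n 0 x)
    + 4 * ((1 - x ^ 2) * cheb_deriv (S n) 1 x + INR (S n) * x * cheb_deriv (S n) 0 x
           - INR (S n) * cheb_deriv n 0 x)).
  { rewrite !cheb_deriv_SS, !S_INR. cbn [Nat.pred]. simpl INR. ring. }
  rewrite IH0, IH1, cheb_deriv_1_succ, !cheb_deriv_0. ring.
Qed.

Lemma cheb_pell n x : cheb (S n) x ^ 2 - 2 * x * cheb n x * cheb (S n) x + cheb n x ^ 2 = 1 - x ^ 2.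
Proof.
  induction n as [|n IH]; [simpl; ring|].
  rewrite <- IH. change (cheb (S (S n)) x) with (2 * x * cheb (S n) x - cheb n x). ring.
Qed.

Lemma cheb_sq_add_deriv_sq n x : x ^ 2 <> 1 ->
  INR n ^ 2 * cheb n x ^ 2 + (1 - x ^ 2) * cheb_deriv n 1 x ^ 2 = INR n ^ 2.
Proof.
  intro Hx. destruct n as [|n]; [simpl; ring|].
  apply (Rmult_eq_reg_l (1 - x ^ 2)); [|lra].
  transitivity (INR (S n) ^ 2 * ((1 - x ^ 2) * cheb (S n) x ^ 2)
                + ((1 - x ^ 2) * cheb_deriv (S n) 1 x) ^ 2); [ring|].
  rewrite cheb_deriv_1_succ.
  transitivity (INR (S n) ^ 2 *
    (cheb (S n) x ^ 2 - 2 * x * cheb n x * cheb (S n) x + cheb n x ^ 2)); [ring|].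
  rewrite cheb_pell. ring.
Qed.

(** * The differentiated Chebyshev equation *)

(* Differentiating (1 - x^2) y'' - x y' + c y = 0 j times gives this equation for D j = y^(j). *)
Definition deriv_eq (D : nat -> R -> R) (c : R) (j : nat) (x : R) : Prop :=
  (1 - x ^ 2) * D (S (S j)) x - (2 * INR j + 1) * x * D (S j) x + (c - INR j ^ 2) * D j x = 0.

Lemma deriv_eq_succ (D : nat -> R -> R) (c : R) (j : nat) (a b : R) :
  (forall x, a < x < b -> is_derive (D j) x (D (S j) x)) ->
  (forall x, a < x < b -> is_derive (D (S j)) x (D (S (S j)) x)) ->
  (forall x, a < x < b -> is_derive (D (S (S j))) x (D (S (S (S j))) x)) ->
  (forall x, a < x < b -> deriv_eq D c j x) -> forall x, a < x < b -> deriv_eq D c (S j) x.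
Proof.
  intros H0 H1 H2 HD x Hx.
  set (G := fun y => (1 - y ^ 2) * D (S (S j)) y - (2 * INR j + 1) * y * D (S j) y
                     + (c - INR j ^ 2) * D j y).
  assert (HG : is_derive G x
     (-2 * x * D (S (S j)) x + (1 - x ^ 2) * D (S (S (S j))) x
      - (2 * INR j + 1) * (1 * D (S j) x + x * D (S (S j)) x) + (c - INR j ^ 2) * D (S j) x)).
  { apply is_derive_Rplus; [apply is_derive_Rminus|].
    - apply is_derive_c_minus_sq_mult, H2, Hx.
    - apply (is_derive_Rext (fun y => (2 * INR j + 1) * (y * D (S j) y))); [intro; ring|].
      apply is_derive_Rscal, is_derive_Rmult; [auto_derive; easy | apply H1, Hx].
    - apply is_derive_Rscal, H0, Hx. }
  assert (E := is_derive_eq_on_interval G (fun _ => 0) a b x _ 0 Hx HD HG ltac:(auto_derive; easy)).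
  unfold deriv_eq. rewrite S_INR. lra.
Qed.

Lemma cheb_deriv_eq n j x : deriv_eq (cheb_deriv n) (INR n ^ 2) j x.
Proof.
  revert x. induction j as [|j IH]; intro x.
  - unfold deriv_eq. pose proof (cheb_equation n x). simpl INR. lra.
  - apply (deriv_eq_succ _ _ j (x - 1) (x + 1)); try (intros; apply is_derive_cheb_deriv); auto; lra.
Qed.

Lemma deriv_eq_all_orders (f : R -> R) (c : R) :
  (forall x, -1 < x < 1 -> is_derive f x (Derive_n f 1 x)) ->
  (forall x, -1 < x < 1 -> is_derive (Derive_n f 1) x (Derive_n f 2 x)) ->
  (forall x, -1 < x < 1 -> deriv_eq (Derive_n f) c 0 x) ->
  forall i x, -1 < x < 1 ->
    is_derive (Derive_n f i) x (Derive_n f (S i) x) /\ deriv_eq (Derive_n f) c i x.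
Proof.
  intros B0 B1 BE.
  assert (H : forall i,
    (forall x, -1 < x < 1 -> is_derive (Derive_n f i) x (Derive_n f (S i) x)) /\
    (forall x, -1 < x < 1 -> is_derive (Derive_n f (S i)) x (Derive_n f (S (S i)) x)) /\
    (forall x, -1 < x < 1 -> deriv_eq (Derive_n f) c i x)).
  { induction i as [|i (IH0 & IH1 & IHE)]; [now split; [|split]|].
    (* the equation expresses the (i+2)-th derivative through lower ones, hence its differentiability *)
    assert (IH2 : forall x, -1 < x < 1 ->
              is_derive (Derive_n f (S (S i))) x (Derive_n f (S (S (S i))) x)).
    { intros x Hx. apply Derive_correct.
      apply (ex_derive_ext_on_interval (fun y => ((2 * INR i + 1) * y * Derive_n f (S i) y
                                         - (c - INR i ^ 2) * Derive_n f i y) / (1 - y ^ 2)) _ (-1) 1 x).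
      - exact Hx.
      - intros y Hy. pose proof (IHE y Hy) as E. unfold deriv_eq in E.
        field_simplify_eq; [lra | nra].
      - auto_derive. repeat split; [eexists; apply IH1, Hx | eexists; apply IH0, Hx | nra]. }
    split; [exact IH1 | split; [exact IH2 |]].
    apply (deriv_eq_succ _ c i (-1) 1); auto. }
  intros i x Hx. destruct (H i) as (Hd & _ & HE). auto.
Qed.

(** * The function S_n *)

Definition semicircle (x : R) : R := sqrt (1 - x ^ 2).

Lemma semicircle_pos x : -1 < x < 1 -> 0 < semicircle x.
Proof. intro Hx. apply sqrt_lt_R0. nra. Qed.

Lemma semicircle_sq x : -1 <= x <= 1 -> semicircle x ^ 2 = 1 - x ^ 2.
Proof. intro Hx. apply pow2_sqrt. nra. Qed.

Lemma semicircle_1 : semicircle 1 = 0.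
Proof. unfold semicircle. replace (1 - 1 ^ 2) with 0 by ring. apply sqrt_0. Qed.

Lemma is_derive_semicircle x : -1 < x < 1 -> is_derive semicircle x (- x / semicircle x).
Proof.
  intro Hx. pose proof (semicircle_pos x Hx). unfold semicircle in *.
  auto_derive; [nra |]. replace (1 + - (x * (x * 1))) with (1 - x ^ 2) by ring. field. lra.
Qed.

Lemma chebS_semicircle n x : chebS n x = / INR n * semicircle x * cheb_deriv n 1 x.
Proof. unfold chebS. now rewrite <- chebD_cheb_deriv. Qed.

Section ChebS.

Variable n : nat.
Hypothesis n_pos : (1 <= n)%nat.

Let INR_n_pos : 0 < INR n.
Proof. apply lt_0_INR. lia. Qed.

Lemma is_derive_chebS x : -1 < x < 1 ->
  is_derive (chebS n) x (- INR n * cheb n x / semicircle x).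
Proof.
  intro Hx. pose proof (semicircle_pos x Hx). pose proof (semicircle_sq x ltac:(lra)) as Hs2.
  apply (is_derive_Rext (fun t => / INR n * (semicircle t * cheb_deriv n 1 t)));
    [intro; rewrite chebS_semicircle; ring|].
  eapply is_derive_eq.
  - apply is_derive_Rscal, is_derive_Rmult; [apply is_derive_semicircle, Hx | apply is_derive_cheb_deriv].
  - pose proof (cheb_equation n x) as E. rewrite cheb_deriv_0 in E.
    apply (Rmult_eq_reg_l (semicircle x)); [|lra].
    field_simplify; [|lra|lra]. rewrite Hs2. field_simplify_eq; lra.
Qed.

Lemma chebS_deriv_1 x : -1 < x < 1 -> Derive_n (chebS n) 1 x = - INR n * cheb n x / semicircle x.
Proof. intro Hx. apply is_derive_unique, is_derive_chebS, Hx. Qed.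

Let chebS_second x : R :=
  (- INR n * cheb_deriv n 1 x * semicircle x - (- INR n * cheb n x) * (- x / semicircle x))
  / semicircle x ^ 2.

Lemma is_derive_chebS_deriv_1 x : -1 < x < 1 ->
  is_derive (Derive_n (chebS n) 1) x (chebS_second x).
Proof.
  intro Hx. pose proof (semicircle_pos x Hx).
  apply (is_derive_ext_loc (fun y => - INR n * cheb n y / semicircle y)).
  { apply (locally_open_interval _ (-1) 1 x Hx). intros y Hy. symmetry. apply chebS_deriv_1, Hy. }
  unfold chebS_second. apply (is_derive_div (fun y => - INR n * cheb n y) semicircle x);
    [| apply is_derive_semicircle, Hx | lra].
  apply (is_derive_Rext (fun y => - INR n * cheb_deriv n 0 y));
    [intro; now rewrite cheb_deriv_0|].
  apply is_derive_Rscal, is_derive_cheb_deriv.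
Qed.

Lemma chebS_deriv_eq_0 x : -1 < x < 1 -> deriv_eq (Derive_n (chebS n)) (INR n ^ 2) 0 x.
Proof.
  intro Hx. unfold deriv_eq. change (Derive_n (chebS n) 2 x) with (Derive (Derive_n (chebS n) 1) x).
  rewrite (is_derive_unique _ _ _ (is_derive_chebS_deriv_1 x Hx)), chebS_deriv_1 by exact Hx.
  simpl Derive_n. rewrite chebS_semicircle. unfold chebS_second.
  pose proof (semicircle_pos x Hx). pose proof (semicircle_sq x ltac:(lra)) as Hs2.
  set (s := semicircle x) in *.
  assert (E : forall k, s ^ (S (S k)) = s ^ k * (1 - x ^ 2)) by (intro k; rewrite <- Hs2; simpl; ring).
  simpl INR. field_simplify_eq; [rewrite ?E; ring | lra].
Qed.

Lemma chebS_deriv_eq i x : -1 < x < 1 ->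
  is_derive (Derive_n (chebS n) i) x (Derive_n (chebS n) (S i) x) /\
  deriv_eq (Derive_n (chebS n)) (INR n ^ 2) i x.
Proof.
  apply deriv_eq_all_orders; [| | exact chebS_deriv_eq_0].
  - intros y Hy. apply Derive_correct. eexists. apply is_derive_chebS, Hy.
  - intros y Hy. apply Derive_correct. eexists. apply is_derive_chebS_deriv_1, Hy.
Qed.

End ChebS.

(** * The energy (T_n^(j))^2 + (S_n^(j))^2 *)

Definition inv_weight (x : R) : R := / (1 - x ^ 2).

Lemma is_derive_inv_weight_pow p x : -1 < x < 1 ->
  is_derive (fun y => inv_weight y ^ p) x (2 * INR p * x * inv_weight x ^ (p + 1)).
Proof.
  intro Hx. unfold inv_weight. auto_derive; [nra|].
  destruct p as [|p]; [simpl; ring|]. rewrite Nat.add_1_r. simpl pred.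
  replace (1 + - (x * (x * 1))) with (1 - x ^ 2) by ring. simpl. field. nra.
Qed.

(* E_{j+1} in terms of E_j, E_j' and E_j'' (see energy_succ). *)
Definition energy_step (n j : nat) (x e e1 e2 : R) : R :=
  e2 / 2 - ((2 * INR j + 1) * x * e1 / 2 - (INR n ^ 2 - INR j ^ 2) * e) / (1 - x ^ 2).

(* energy_poly n j = sum_m energy_coef n j m * u^(j+m) with u = 1/(1-x^2); the recursion is
   the one making energy_poly obey energy_step. *)
Fixpoint energy_coef (n j m : nat) : R :=
  match j with
  | O => match m with O => 1 | _ => 0 end
  | S j' => (match m with
             | O => 0
             | S m' => energy_coef n j' m' * (INR (j' + m') * (2 * INR m' + 1))
             end)
            + energy_coef n j' m * (INR n ^ 2 - INR j' ^ 2 - 2 * INR m * INR (j' + m))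
  end.

Lemma energy_coef_S_0 n j :
  energy_coef n (S j) 0 = energy_coef n j 0 * (INR n ^ 2 - INR j ^ 2).
Proof. simpl. rewrite Nat.add_0_r. ring. Qed.

Lemma energy_coef_S_S n j m : energy_coef n (S j) (S m) =
  energy_coef n j m * (INR (j + m) * (2 * INR m + 1))
  + energy_coef n j (S m) * (INR n ^ 2 - INR j ^ 2 - 2 * INR (S m) * INR (j + S m)).
Proof. reflexivity. Qed.

Lemma energy_coef_gt n j m : (j < m)%nat -> energy_coef n j m = 0.
Proof.
  revert m; induction j as [|j IH]; intros m H; destruct m as [|m]; try lia; [reflexivity|].
  rewrite energy_coef_S_S, !IH by lia. ring.
Qed.

Lemma energy_coef_diag n j : energy_coef n (S j) (S j) = 0.
Proof.
  induction j as [|j IH]; [simpl; ring|].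
  rewrite energy_coef_S_S, IH, energy_coef_gt by lia. ring.
Qed.

Definition energy_poly (n j : nat) (x : R) : R :=
  sumR (fun m => energy_coef n j m * inv_weight x ^ (j + m)) (S j).

Definition energy_poly_d1 (n j : nat) (x : R) : R :=
  sumR (fun m => energy_coef n j m * (2 * INR (j + m) * x * inv_weight x ^ (j + m + 1))) (S j).

Definition energy_poly_d2 (n j : nat) (x : R) : R :=
  sumR (fun m => energy_coef n j m * (2 * INR (j + m) *
    (inv_weight x ^ (j + m + 1) + x * (2 * INR (j + m + 1) * x * inv_weight x ^ (j + m + 2))))) (S j).

Lemma is_derive_energy_poly n j x : -1 < x < 1 ->
  is_derive (energy_poly n j) x (energy_poly_d1 n j x).
Proof.
  intro Hx. apply (is_derive_sumR (fun m y => energy_coef n j m * inv_weight y ^ (j + m))).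
  intro m. apply is_derive_Rscal, is_derive_inv_weight_pow, Hx.
Qed.

Lemma is_derive_energy_poly_d1 n j x : -1 < x < 1 ->
  is_derive (energy_poly_d1 n j) x (energy_poly_d2 n j x).
Proof.
  intro Hx. apply (is_derive_sumR
    (fun m y => energy_coef n j m * (2 * INR (j + m) * y * inv_weight y ^ (j + m + 1)))).
  intro m. apply is_derive_Rscal.
  apply (is_derive_Rext (fun y => 2 * INR (j + m) * (y * inv_weight y ^ (j + m + 1))));
    [intro; ring|].
  eapply is_derive_eq.
  - apply is_derive_Rscal, is_derive_Rmult; [auto_derive; easy | apply is_derive_inv_weight_pow, Hx].
  - replace (j + m + 1 + 1)%nat with (j + m + 2)%nat by lia. ring.
Qed.

Lemma energy_coef_reindex n j (V : R) :
  sumR (fun m => energy_coef n j m * (INR (j + m) * (2 * INR m + 1) * V ^ (j + m + 2)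
         + (INR n ^ 2 - INR j ^ 2 - 2 * INR m * INR (j + m)) * V ^ (j + m + 1))) (S j)
  = sumR (fun m => energy_coef n (S j) m * V ^ (S j + m)) (S (S j)).
Proof.
  set (A := fun m => energy_coef n j m * (INR (j + m) * (2 * INR m + 1)) * V ^ (j + m + 2)).
  set (G := fun m => energy_coef n j m * (INR n ^ 2 - INR j ^ 2 - 2 * INR m * INR (j + m))
                     * V ^ (j + m + 1)).
  transitivity (sumR A (S j) + sumR G (S (S j))).
  { assert (HG : G (S j) = 0) by (unfold G; rewrite energy_coef_gt by lia; ring).
    change (sumR G (S (S j))) with (sumR G (S j) + G (S j)).
    rewrite HG, Rplus_0_r, <- sumR_plus. apply sumR_ext. intros. unfold A, G. ring. }
  rewrite !(sumR_first _ (S j)), <- Rplus_assoc, (Rplus_comm (sumR A _)), Rplus_assoc, <- sumR_plus.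
  f_equal.
  - unfold G. rewrite energy_coef_S_0, !Nat.add_0_r, Nat.add_1_r. change (INR 0) with 0. ring.
  - apply sumR_ext. intros m _. unfold A, G. rewrite energy_coef_S_S.
    replace (S j + S m)%nat with (j + m + 2)%nat by lia.
    replace (j + S m + 1)%nat with (j + m + 2)%nat by lia. rewrite !plus_INR, !S_INR. ring.
Qed.

Lemma energy_poly_succ n j x : -1 < x < 1 ->
  energy_step n j x (energy_poly n j x) (energy_poly_d1 n j x) (energy_poly_d2 n j x)
  = energy_poly n (S j) x.
Proof.
  intro Hx. assert (Hw : 1 - x ^ 2 <> 0) by nra.
  unfold energy_poly at 2. rewrite <- energy_coef_reindex.
  unfold energy_step, energy_poly, energy_poly_d1, energy_poly_d2.
  transitivity (sumR (fun m =>
      / 2 * (energy_coef n j m * (2 * INR (j + m) * (inv_weight x ^ (j + m + 1)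
               + x * (2 * INR (j + m + 1) * x * inv_weight x ^ (j + m + 2)))))
    + - ((2 * INR j + 1) * x / (2 * (1 - x ^ 2)))
        * (energy_coef n j m * (2 * INR (j + m) * x * inv_weight x ^ (j + m + 1)))
    + (INR n ^ 2 - INR j ^ 2) / (1 - x ^ 2) * (energy_coef n j m * inv_weight x ^ (j + m))) (S j)).
  { rewrite !sumR_plus, !sumR_scal. field. exact Hw. }
  apply sumR_ext. intros m _. rewrite !pow_add, !plus_INR. unfold inv_weight.
  set (W := (/ (1 - x ^ 2)) ^ j * (/ (1 - x ^ 2)) ^ m). simpl INR. field. exact Hw.
Qed.

Section Energy.

Variable n : nat.
Hypothesis n_pos : (1 <= n)%nat.

Definition energy (j : nat) (x : R) : R := cheb_deriv n j x ^ 2 + Derive_n (chebS n) j x ^ 2.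

Let energy_d1 (j : nat) (x : R) : R :=
  2 * (cheb_deriv n j x * cheb_deriv n (S j) x
       + Derive_n (chebS n) j x * Derive_n (chebS n) (S j) x).

Let energy_d2 (j : nat) (x : R) : R :=
  2 * (cheb_deriv n (S j) x ^ 2 + cheb_deriv n j x * cheb_deriv n (S (S j)) x
       + Derive_n (chebS n) (S j) x ^ 2 + Derive_n (chebS n) j x * Derive_n (chebS n) (S (S j)) x).

Let is_derive_chebS_deriv j x : -1 < x < 1 ->
  is_derive (Derive_n (chebS n) j) x (Derive_n (chebS n) (S j) x).
Proof. intro Hx. apply (chebS_deriv_eq n n_pos j x Hx). Qed.

Lemma energy_0 x : -1 < x < 1 -> energy 0 x = 1.
Proof.
  intro Hx. unfold energy. simpl Derive_n. rewrite chebS_semicircle, cheb_deriv_0.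
  assert (Hn : 0 < INR n) by (apply lt_0_INR; lia).
  pose proof (semicircle_sq x ltac:(lra)) as Hs.
  pose proof (cheb_sq_add_deriv_sq n x ltac:(nra)) as HG.
  apply (Rmult_eq_reg_l (INR n ^ 2)); [|apply pow_nonzero; lra].
  rewrite <- HG at 2. replace ((/ INR n * semicircle x * cheb_deriv n 1 x) ^ 2)
    with (semicircle x ^ 2 * cheb_deriv n 1 x ^ 2 / INR n ^ 2) by (field; lra).
  rewrite Hs. field. lra.
Qed.

Lemma is_derive_energy j x : -1 < x < 1 -> is_derive (energy j) x (energy_d1 j x).
Proof.
  intro Hx. unfold energy, energy_d1.
  apply (is_derive_Rext (fun y => cheb_deriv n j y * cheb_deriv n j y
    + Derive_n (chebS n) j y * Derive_n (chebS n) j y)); [intro; ring|].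
  pose proof (is_derive_cheb_deriv n j x) as HT. pose proof (is_derive_chebS_deriv j x Hx) as HS.
  eapply is_derive_eq;
    [exact (is_derive_Rplus _ _ x _ _ (is_derive_Rmult _ _ x _ _ HT HT)
                                      (is_derive_Rmult _ _ x _ _ HS HS)) | ring].
Qed.

Lemma is_derive_energy_d1 j x : -1 < x < 1 -> is_derive (energy_d1 j) x (energy_d2 j x).
Proof.
  intro Hx. unfold energy_d1, energy_d2.
  pose proof (is_derive_cheb_deriv n j x) as HT. pose proof (is_derive_chebS_deriv j x Hx) as HS.
  pose proof (is_derive_cheb_deriv n (S j) x) as HT'. pose proof (is_derive_chebS_deriv (S j) x Hx) as HS'.
  eapply is_derive_eq; [apply is_derive_Rscal; exact (is_derive_Rplus _ _ x _ _
    (is_derive_Rmult _ _ x _ _ HT HT') (is_derive_Rmult _ _ x _ _ HS HS')) | ring].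
Qed.

Lemma energy_succ j x : -1 < x < 1 ->
  energy (S j) x = energy_step n j x (energy j x) (energy_d1 j x) (energy_d2 j x).
Proof.
  intro Hx. assert (Hw : 1 - x ^ 2 <> 0) by nra.
  pose proof (cheb_deriv_eq n j x) as ET. pose proof (proj2 (chebS_deriv_eq n n_pos j x Hx)) as ES.
  unfold deriv_eq in ET, ES.
  unfold energy, energy_step, energy_d1, energy_d2.
  set (T0 := cheb_deriv n j x) in *. set (T1 := cheb_deriv n (S j) x) in *.
  set (T2 := cheb_deriv n (S (S j)) x) in *.
  set (S0 := Derive_n (chebS n) j x) in *. set (S1 := Derive_n (chebS n) (S j) x) in *.
  set (S2 := Derive_n (chebS n) (S (S j)) x) in *.
  symmetry. apply Rminus_diag_uniq.
  transitivity ((T0 * ((1 - x ^ 2) * T2 - (2 * INR j + 1) * x * T1 + (INR n ^ 2 - INR j ^ 2) * T0)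
                 + S0 * ((1 - x ^ 2) * S2 - (2 * INR j + 1) * x * S1 + (INR n ^ 2 - INR j ^ 2) * S0))
                / (1 - x ^ 2)); [field; exact Hw|].
  rewrite ET, ES. field. exact Hw.
Qed.

Lemma energy_eq_poly j x : -1 < x < 1 -> energy j x = energy_poly n j x.
Proof.
  revert x. induction j as [|j IH]; intros x Hx.
  - rewrite energy_0 by exact Hx. unfold energy_poly. simpl. ring.
  - rewrite energy_succ, <- energy_poly_succ by exact Hx.
    destruct (derivatives_eq_on_interval (energy j) (energy_poly n j) (energy_d1 j)
                (energy_poly_d1 n j) (-1) 1 x (energy_d2 j x) (energy_poly_d2 n j x) Hx IH)
      as [E1 E2].
    + intros y Hy. apply is_derive_energy, Hy.
    + intros y Hy. apply is_derive_energy_poly, Hy.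
    + apply is_derive_energy_d1, Hx.
    + apply is_derive_energy_poly_d1, Hx.
    + now rewrite IH, E1, E2.
Qed.

End Energy.

(** * The constants A_{n,k} and B_{n,k} *)

Definition sq_diff_prod (n m : nat) : R := prodR1 (fun i => INR n ^ 2 - INR i ^ 2) m.

Lemma sq_diff_prod_S n m : sq_diff_prod n (S m) = sq_diff_prod n m * (INR n ^ 2 - INR (S m) ^ 2).
Proof. reflexivity. Qed.

Lemma sq_diff_prod_pos n m : (m < n)%nat -> 0 < sq_diff_prod n m.
Proof.
  induction m as [|m IH]; intro H; [unfold sq_diff_prod; simpl; lra|].
  rewrite sq_diff_prod_S. apply Rmult_lt_0_compat; [apply IH; lia|].
  assert (INR (S m) < INR n) by (apply lt_INR; lia). pose proof (pos_INR (S m)). nra.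
Qed.

Lemma oddfact_S m : oddfact (S m) = oddfact m * (2 * INR (S m) - 1).
Proof. reflexivity. Qed.

Lemma oddfact_pos m : 0 < oddfact m.
Proof.
  induction m as [|m IH]; [unfold oddfact; simpl; lra|]. rewrite oddfact_S.
  apply Rmult_lt_0_compat; [exact IH|]. rewrite S_INR. pose proof (pos_INR m). lra.
Qed.

Lemma INR_fact_S k : INR (Factorial.fact (S k)) = INR (S k) * INR (Factorial.fact k).
Proof. rewrite fact_simpl, mult_INR. reflexivity. Qed.

Lemma binomial_diag N : Binomial.C N N = 1.
Proof. unfold Binomial.C. rewrite Nat.sub_diag. simpl. field. apply INR_fact_neq_0. Qed.

Lemma binomial_0 N : Binomial.C N 0 = 1.
Proof. unfold Binomial.C. rewrite Nat.sub_0_r. simpl. field. apply INR_fact_neq_0. Qed.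

Lemma binomial_pos a b : 0 < Binomial.C a b.
Proof.
  unfold Binomial.C. pose proof (INR_fact_lt_0 a). pose proof (INR_fact_lt_0 b).
  pose proof (INR_fact_lt_0 (a - b)). apply Rdiv_lt_0_compat; [|apply Rmult_lt_0_compat]; assumption.
Qed.

(* c_{m,k} without the case split: the two agree at m = 0. *)
Definition c_coef (m k : nat) : R := Binomial.C (k - 1 + m) (2 * m) * oddfact m ^ 2.

Lemma cmk_c_coef m k : cmk m k = c_coef m k.
Proof.
  destruct m; [|reflexivity].
  unfold c_coef, cmk, oddfact. simpl. rewrite binomial_0. ring.
Qed.

Lemma c_coef_0 k : c_coef 0 k = 1.
Proof. rewrite <- cmk_c_coef. reflexivity. Qed.

Lemma c_coef_pos m k : 0 < c_coef m k.
Proof. apply Rmult_lt_0_compat; [apply binomial_pos | apply pow_lt, oddfact_pos]. Qed.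

Lemma c_coef_recurrence (b j : nat) (N : R) : (S b < j)%nat ->
  c_coef b j * (INR (j + b) * (2 * INR b + 1)) * (N - INR (S b) ^ 2)
  + c_coef (S b) j * (N - INR j ^ 2 - 2 * INR (S b) * INR (j + S b))
  = c_coef (S b) (S j) * (N - INR j ^ 2).
Proof.
  intro Hj. remember (j - b - 2)%nat as a eqn:Ha. replace j with (b + 2 + a)%nat by lia. clear Ha Hj.
  unfold c_coef, Binomial.C.
  replace (b + 2 + a - 1 + b)%nat with (a + 2 * b + 1)%nat by lia.
  replace (a + 2 * b + 1 - 2 * b)%nat with (S a) by lia.
  replace (b + 2 + a - 1 + S b)%nat with (S (a + 2 * b + 1)) by lia.
  replace (S (a + 2 * b + 1) - 2 * S b)%nat with a by lia.
  replace (S (b + 2 + a) - 1 + S b)%nat with (S (S (a + 2 * b + 1))) by lia.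
  replace (S (S (a + 2 * b + 1)) - 2 * S b)%nat with (S a) by lia.
  replace (2 * S b)%nat with (S (S (2 * b))) by lia.
  rewrite !INR_fact_S, oddfact_S.
  pose proof (INR_fact_neq_0 a). pose proof (INR_fact_neq_0 (2 * b)).
  pose proof (INR_fact_neq_0 (a + 2 * b + 1)). pose proof (pos_INR a). pose proof (pos_INR b).
  rewrite ?S_INR, ?plus_INR, ?mult_INR, ?S_INR, ?plus_INR. change (INR 0) with 0.
  field. repeat split; lra.
Qed.

Lemma energy_coef_closed n j : (S j <= n)%nat -> forall m, (m < S j)%nat ->
  energy_coef n (S j) m = INR n ^ 2 * c_coef m (S j) * sq_diff_prod n j / sq_diff_prod n m.
Proof.
  induction j as [|j IH]; intros Hj m Hm.
  - assert (m = 0%nat) by lia. subst.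
    rewrite energy_coef_S_0, c_coef_0. unfold sq_diff_prod. simpl. field.
  - assert (Hpos : forall i, (i <= S j)%nat -> 0 < sq_diff_prod n i) by (intros; apply sq_diff_prod_pos; lia).
    pose proof (Hpos j ltac:(lia)). pose proof (Hpos (S j) ltac:(lia)).
    destruct m as [|m].
    + rewrite energy_coef_S_0, IH, !c_coef_0, sq_diff_prod_S by lia.
      pose proof (Hpos 0%nat ltac:(lia)). field. lra.
    + rewrite energy_coef_S_S. destruct (Nat.eq_dec m j) as [->|Hmj].
      * rewrite energy_coef_diag, IH by lia. unfold c_coef.
        replace (S (S j) - 1 + S j)%nat with (2 * S j)%nat by lia.
        replace (S j - 1 + j)%nat with (2 * j)%nat by lia.
        rewrite !binomial_diag, oddfact_S, plus_INR, S_INR. field. lra.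
      * rewrite !IH by lia.
        pose proof (Hpos m ltac:(lia)). pose proof (Hpos (S m) ltac:(lia)).
        pose proof (c_coef_recurrence m (S j) (INR n ^ 2) ltac:(lia)) as CR.
        rewrite sq_diff_prod_S in *.
        assert (HN : INR n ^ 2 - INR (S m) ^ 2 <> 0).
        { assert (INR (S m) < INR n) by (apply lt_INR; lia). pose proof (pos_INR (S m)). nra. }
        transitivity (INR n ^ 2 * sq_diff_prod n j / (sq_diff_prod n m * (INR n ^ 2 - INR (S m) ^ 2)) *
          (c_coef m (S j) * (INR (S j + m) * (2 * INR m + 1)) * (INR n ^ 2 - INR (S m) ^ 2) +
           c_coef (S m) (S j) * (INR n ^ 2 - INR (S j) ^ 2 - 2 * INR (S m) * INR (S j + S m)))).
        { field. lra. }
        rewrite CR, sq_diff_prod_S. field. lra.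
Qed.

Lemma cheb_deriv_at_1_succ n j :
  (2 * INR j + 1) * cheb_deriv n (S j) 1 = (INR n ^ 2 - INR j ^ 2) * cheb_deriv n j 1.
Proof. pose proof (cheb_deriv_eq n j 1) as E. unfold deriv_eq in E. lra. Qed.

Lemma cheb_deriv_at_1 n j : cheb_deriv n (S j) 1 * oddfact (S j) = INR n ^ 2 * sq_diff_prod n j.
Proof.
  induction j as [|j IH].
  - pose proof (cheb_deriv_at_1_succ n 0) as E. rewrite cheb_deriv_0, cheb_at_1 in E.
    unfold oddfact, sq_diff_prod. simpl in *. lra.
  - rewrite sq_diff_prod_S, oddfact_S.
    replace (2 * INR (S (S j)) - 1) with (2 * INR (S j) + 1) by (rewrite (S_INR (S j)); ring).
    transitivity (oddfact (S j) * ((2 * INR (S j) + 1) * cheb_deriv n (S (S j)) 1)); [ring|].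
    rewrite cheb_deriv_at_1_succ.
    transitivity (cheb_deriv n (S j) 1 * oddfact (S j) * (INR n ^ 2 - INR (S j) ^ 2)); [ring|].
    rewrite IH. ring.
Qed.

Lemma cheb_deriv_at_1_pos n j : (j <= n)%nat -> 0 < cheb_deriv n j 1.
Proof.
  intro H. destruct j as [|j]; [rewrite cheb_deriv_0, cheb_at_1; lra|].
  pose proof (cheb_deriv_at_1 n j) as U. pose proof (oddfact_pos (S j)).
  assert (0 < INR n ^ 2 * sq_diff_prod n j).
  { apply Rmult_lt_0_compat; [apply pow_lt, lt_0_INR; lia | apply sq_diff_prod_pos; lia]. }
  destruct (Rlt_or_le 0 (cheb_deriv n (S j) 1)); [assumption | nra].
Qed.

Lemma energy_coef_nonneg n k m : (1 <= k <= n)%nat -> 0 <= energy_coef n k m.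
Proof.
  intros Hk. destruct k as [|k]; [lia|].
  destruct (Compare_dec.lt_dec m (S k)) as [Hm|Hm].
  - rewrite energy_coef_closed by lia. apply Rlt_le, Rdiv_lt_0_compat; [|apply sq_diff_prod_pos; lia].
    apply Rmult_lt_0_compat; [apply Rmult_lt_0_compat|];
      [apply pow_lt, lt_0_INR; lia | apply c_coef_pos | apply sq_diff_prod_pos; lia].
  - destruct (Nat.eq_dec m (S k)) as [->|Hmk]; [rewrite energy_coef_diag; lra|].
    rewrite energy_coef_gt by lia. lra.
Qed.

Lemma energy_coef_0_pos n k : (1 <= k <= n)%nat -> 0 < energy_coef n k 0.
Proof.
  intros Hk. destruct k as [|k]; [lia|].
  rewrite energy_coef_closed by lia. apply Rdiv_lt_0_compat; [|apply sq_diff_prod_pos; lia].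
  apply Rmult_lt_0_compat; [apply Rmult_lt_0_compat|];
    [apply pow_lt, lt_0_INR; lia | apply c_coef_pos | apply sq_diff_prod_pos; lia].
Qed.

Lemma energy_poly_lt n k x y : (1 <= k <= n)%nat -> x ^ 2 < y ^ 2 < 1 ->
  energy_poly n k x < energy_poly n k y.
Proof.
  intros Hk Hxy.
  assert (HU : 0 < inv_weight x < inv_weight y).
  { unfold inv_weight. split; [apply Rinv_0_lt_compat; lra|].
    apply Rinv_lt_contravar; [apply Rmult_lt_0_compat|]; lra. }
  unfold energy_poly. rewrite !sumR_first. apply Rplus_lt_le_compat.
  - apply Rmult_lt_compat_l; [apply energy_coef_0_pos, Hk|]. apply pow_lt_compat; [lra | lia].
  - apply sumR_le. intros m _. apply Rmult_le_compat_l; [apply energy_coef_nonneg, Hk|].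
    apply pow_incr. lra.
Qed.

Lemma delta_sq n k : delta n k ^ 2 = energy n k (xk n k) / cheb_deriv n k 1 ^ 2.
Proof.
  unfold delta, chebDD. rewrite !chebD_cheb_deriv. unfold Rdiv.
  rewrite Rpow_mult_distr, pow2_sqrt, pow_inv; [reflexivity|].
  pose proof (pow2_ge_0 (cheb_deriv n k (xk n k))). pose proof (pow2_ge_0 (Derive_n (chebS n) k (xk n k))).
  lra.
Qed.

Section Xk.

Variables n k : nat.
Hypothesis k_range : (1 <= k <= n)%nat.

Let INR_k_pos : 0 < INR k.
Proof. apply lt_0_INR. lia. Qed.

Let INR_k_le_n : INR k <= INR n.
Proof. apply le_INR. lia. Qed.

Lemma xk_sq : xk n k ^ 2 = 1 - INR k ^ 2 / INR n ^ 2.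
Proof.
  unfold xk. apply pow2_sqrt.
  enough (INR k ^ 2 / INR n ^ 2 <= 1) by lra.
  apply (Rmult_le_reg_r (INR n ^ 2)); [nra|]. field_simplify; nra.
Qed.

Lemma xk_range : 0 <= xk n k < 1.
Proof.
  pose proof xk_sq. pose proof (sqrt_pos (1 - INR k ^ 2 / INR n ^ 2)).
  assert (0 < INR k ^ 2 / INR n ^ 2) by (apply Rdiv_lt_0_compat; nra).
  unfold xk in *. split; [lra | nra].
Qed.

Lemma inv_weight_xk : inv_weight (xk n k) = INR n ^ 2 / INR k ^ 2.
Proof.
  unfold inv_weight. rewrite xk_sq.
  replace (1 - (1 - INR k ^ 2 / INR n ^ 2)) with (INR k ^ 2 / INR n ^ 2) by ring.
  field. split; lra.
Qed.

End Xk.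

Lemma energy_at_xk n k : (1 <= k <= n)%nat ->
  energy n k (xk n k) = Ank n k * Bnk n k * cheb_deriv n k 1 ^ 2.
Proof.
  intro Hk. destruct k as [|k]; [lia|].
  assert (Hn : 0 < INR n) by (apply lt_0_INR; lia).
  assert (Hk' : 0 < INR (S k)) by (apply lt_0_INR; lia).
  assert (HQ : 0 < sq_diff_prod n k) by (apply sq_diff_prod_pos; lia).
  pose proof (oddfact_pos (S k)).
  rewrite (energy_eq_poly n ltac:(lia)) by (pose proof (xk_range n (S k) Hk); lra).
  replace (cheb_deriv n (S k) 1) with (INR n ^ 2 * sq_diff_prod n k / oddfact (S k))
    by (rewrite <- cheb_deriv_at_1; field; lra).
  unfold energy_poly. rewrite (inv_weight_xk n (S k) Hk).
  change (sumR ?f (S (S k))) with (sumR f (S k) + f (S k)). cbv beta.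
  rewrite energy_coef_diag, Rmult_0_l, Rplus_0_r.
  unfold Ank, Bnk. replace (S k - 1)%nat with k by lia. fold (sq_diff_prod n k).
  change (prodR1 (fun j : nat => INR n ^ 2 - INR j ^ 2)) with (sq_diff_prod n).
  transitivity (INR n ^ (2 * S k) / INR (S k) ^ (2 * S k) * (INR n ^ 2 * sq_diff_prod n k) *
     sumR (fun m => cmk m (S k) / INR (S k) ^ (2 * m) * (INR n ^ (2 * m) / sq_diff_prod n m)) (S k)).
  - rewrite <- sumR_scal. apply sumR_ext. intros m Hm.
    rewrite energy_coef_closed, cmk_c_coef, sq_ratio_pow by (lia || lra).
    assert (0 < sq_diff_prod n m) by (apply sq_diff_prod_pos; lia).
    field. repeat split; try lra; apply pow_nonzero; lra.
  - set (Sm := sumR _ (S k)).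
    assert (0 < INR n ^ (2 * S k)) by (apply pow_lt; lra).
    assert (0 < INR (S k) ^ (2 * S k)) by (apply pow_lt; lra).
    set (A := INR n ^ (2 * S k)) in *. set (B := INR (S k) ^ (2 * S k)) in *.
    field. repeat split; lra.
Qed.

Lemma fact_add_sub n k : (S k <= n)%nat ->
  INR (Factorial.fact (n + S k)) =
  INR (Factorial.fact (n - S k)) * INR (n + S k) * INR n * sq_diff_prod n k.
Proof.
  induction k as [|k IH]; intro H.
  - unfold sq_diff_prod. simpl prodR1. destruct n as [|n]; [lia|].
    replace (S n + 1)%nat with (S (S n)) by lia. replace (S n - 1)%nat with n by lia.
    rewrite !INR_fact_S. ring.
  - replace (n + S (S k))%nat with (S (n + S k)) by lia. rewrite INR_fact_S, IH by lia.
    replace (n - S k)%nat with (S (n - S (S k))) by lia. rewrite INR_fact_S, sq_diff_prod_S.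
    replace (S (n - S (S k))) with (n - S k)%nat by lia.
    rewrite minus_INR by lia. rewrite !plus_INR, !S_INR. ring.
Qed.

Lemma Bnk_factorial n k : (1 <= k <= n)%nat ->
  Bnk n k = (INR (n + k) / INR n) *
            ((INR n) ^ (2 * k) * INR (Factorial.fact (n - k)) / INR (Factorial.fact (n + k))).
Proof.
  intro Hk. destruct k as [|k]; [lia|].
  rewrite fact_add_sub by lia. unfold Bnk. replace (S k - 1)%nat with k by lia. fold (sq_diff_prod n k).
  assert (0 < INR n) by (apply lt_0_INR; lia). assert (0 < sq_diff_prod n k) by (apply sq_diff_prod_pos; lia).
  assert (0 < INR (n + S k)) by (apply lt_0_INR; lia). pose proof (INR_fact_lt_0 (n - S k)).
  set (A := INR n ^ (2 * S k)). field. repeat split; lra.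
Qed.

Lemma sq_ratio_antimono n k m : (m < k <= n)%nat ->
  INR n ^ (2 * m) / sq_diff_prod n m <= INR k ^ (2 * m) / sq_diff_prod k m.
Proof.
  intros Hm. induction m as [|m IH]; [unfold sq_diff_prod; simpl; lra|].
  replace (2 * S m)%nat with (2 * m + 2)%nat by lia. rewrite !pow_add, !sq_diff_prod_S.
  assert (0 < sq_diff_prod n m) by (apply sq_diff_prod_pos; lia).
  assert (0 < sq_diff_prod k m) by (apply sq_diff_prod_pos; lia).
  assert (INR (S m) < INR k) by (apply lt_INR; lia). assert (INR k <= INR n) by (apply le_INR; lia).
  assert (0 < INR (S m)) by (apply lt_0_INR; lia).
  assert (Pn : 0 < INR n ^ 2 - INR (S m) ^ 2) by nra. assert (Pk : 0 < INR k ^ 2 - INR (S m) ^ 2) by nra.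
  assert (R1 : INR n ^ 2 / (INR n ^ 2 - INR (S m) ^ 2) <= INR k ^ 2 / (INR k ^ 2 - INR (S m) ^ 2)).
  { apply (Rmult_le_reg_r ((INR n ^ 2 - INR (S m) ^ 2) * (INR k ^ 2 - INR (S m) ^ 2))); [nra|].
    field_simplify; [|lra|lra].
    assert (INR k ^ 2 <= INR n ^ 2) by (pose proof (pos_INR k); nra).
    pose proof (pow2_ge_0 (INR (S m))). nra. }
  assert (R0 : 0 <= INR n ^ (2 * m) / sq_diff_prod n m)
    by (apply Rlt_le, Rdiv_lt_0_compat; [apply pow_lt|]; lra).
  assert (R2 : 0 <= INR n ^ 2 / (INR n ^ 2 - INR (S m) ^ 2)) by (apply Rlt_le, Rdiv_lt_0_compat; nra).
  specialize (IH ltac:(lia)).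
  transitivity (INR n ^ (2 * m) / sq_diff_prod n m * (INR n ^ 2 / (INR n ^ 2 - INR (S m) ^ 2))).
  { right. set (A := INR n ^ (2 * m)). field. lra. }
  transitivity (INR k ^ (2 * m) / sq_diff_prod k m * (INR k ^ 2 / (INR k ^ 2 - INR (S m) ^ 2))).
  { apply Rmult_le_compat; assumption. }
  right. set (A := INR k ^ (2 * m)). field. lra.
Qed.

Lemma Ank_antimono n k : (1 <= k <= n)%nat -> Ank n k <= Ank k k.
Proof.
  intro Hk. unfold Ank. apply Rmult_le_compat_l.
  { apply Rlt_le, Rdiv_lt_0_compat; [apply pow_lt, oddfact_pos | apply pow_lt, lt_0_INR; lia]. }
  apply sumR_le. intros m Hm. apply Rmult_le_compat_l.
  { rewrite cmk_c_coef. apply Rlt_le, Rdiv_lt_0_compat; [apply c_coef_pos | apply pow_lt, lt_0_INR; lia]. }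
  apply sq_ratio_antimono. lia.
Qed.

Lemma cheb_deriv_odd_at_0 n j : Nat.Odd (n + j) -> cheb_deriv n j 0 = 0.
Proof.
  intros [p Hp]. pose proof (cheb_deriv_opp n j 0) as P.
  rewrite Ropp_0, Hp, pow_add, pow_mult in P. replace ((-1) ^ 2) with 1 in P by ring.
  rewrite pow1 in P. lra.
Qed.

Lemma chebS_deriv_diag_at_0 n : (1 <= n)%nat -> Derive_n (chebS n) n 0 = 0.
Proof.
  intro Hn. assert (I0 : -1 < 0 < 1) by lra.
  assert (Rec : forall j,
    Derive_n (chebS n) (S (S j)) 0 = - (INR n ^ 2 - INR j ^ 2) * Derive_n (chebS n) j 0).
  { intro j. pose proof (proj2 (chebS_deriv_eq n Hn j 0 I0)) as E. unfold deriv_eq in E. lra. }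
  destruct (Nat.Even_or_Odd n) as [[q Hq]|[q Hq]].
  - assert (H : forall i, Derive_n (chebS n) (2 * i) 0 = 0).
    { induction i as [|i IH].
      - simpl Derive_n. rewrite chebS_semicircle, cheb_deriv_odd_at_0 by (exists q; lia). ring.
      - replace (2 * S i)%nat with (S (S (2 * i))) by lia. rewrite Rec, IH. ring. }
    rewrite Hq at 2. apply H.
  - assert (H : forall i, Derive_n (chebS n) (2 * i + 1) 0 = 0).
    { induction i as [|i IH].
      - simpl (2 * 0 + 1)%nat. rewrite chebS_deriv_1 by assumption.
        rewrite <- cheb_deriv_0, cheb_deriv_odd_at_0 by (exists q; lia). unfold Rdiv. ring.
      - replace (2 * S i + 1)%nat with (S (S (2 * i + 1))) by lia. rewrite Rec, IH. ring. }
    rewrite Hq at 2. apply H.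
Qed.

Lemma xk_diag k : (1 <= k)%nat -> xk k k = 0.
Proof.
  intro Hk. unfold xk. assert (0 < INR k) by (apply lt_0_INR; lia).
  replace (1 - INR k ^ 2 / INR k ^ 2) with 0 by (field; lra). apply sqrt_0.
Qed.

(* At n = k the point x_k is 0, where the energy reduces to the constant (T_k^{(k)})^2. *)
Lemma Ank_Bnk_diag k : (1 <= k)%nat -> Ank k k * Bnk k k = 1.
Proof.
  intro Hk. pose proof (energy_at_xk k k ltac:(lia)) as E.
  rewrite xk_diag in E by exact Hk. unfold energy in E.
  rewrite chebS_deriv_diag_at_0, (cheb_deriv_diag_const k 0 1) in E by exact Hk.
  pose proof (cheb_deriv_at_1_pos k k (le_n k)).
  apply (Rmult_eq_reg_r (cheb_deriv k k 1 ^ 2)); [|apply pow_nonzero; lra]. lra.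
Qed.

Lemma Ank_bound n k : (1 <= k <= n)%nat ->
  Ank n k <= / 2 * (INR (Factorial.fact (2 * k)) / (INR k) ^ (2 * k)).
Proof.
  intro Hk. eapply Rle_trans; [apply Ank_antimono, Hk|]. right.
  pose proof (Ank_Bnk_diag k ltac:(lia)) as AB. rewrite (Bnk_factorial k k ltac:(lia)) in AB.
  rewrite Nat.sub_diag in AB. simpl (Factorial.fact 0) in AB.
  replace (k + k)%nat with (2 * k)%nat in AB by lia.
  assert (0 < INR k) by (apply lt_0_INR; lia). pose proof (INR_fact_lt_0 (2 * k)).
  assert (0 < INR k ^ (2 * k)) by (apply pow_lt; lra).
  rewrite mult_INR in AB. simpl (INR 2) in AB. simpl (INR 1) in AB.
  set (F := INR (Factorial.fact (2 * k))) in *. set (P := INR k ^ (2 * k)) in *.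
  apply (Rmult_eq_reg_r (2 * P / F)); [|apply Rgt_not_eq, Rdiv_lt_0_compat; lra].
  transitivity (Ank k k * ((1 + 1) * INR k / INR k * (P * 1 / F))); [field; lra|].
  rewrite AB. field. lra.
Qed.

(** * The rightmost zero of T_n^(k+1) *)

Lemma MVT_is_derive (f df : R -> R) (a b : R) : a < b ->
  (forall c, a < c < b -> is_derive f c (df c)) ->
  (forall c, a <= c <= b -> continuity_pt f c) ->
  exists c, a < c < b /\ f b - f a = df c * (b - a).
Proof.
  intros Hab Hd Hc.
  set (prf := fun c (H : a < c < b) =>
    exist (fun l => derivable_pt_abs f c l) (df c) (proj1 (is_derive_Reals _ _ _) (Hd c H))).
  set (prid := fun c (_ : a < c < b) => derivable_pt_id c).
  destruct (MVT f id a b prf prid Hab Hc) as (c & P & E).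
  { intros; apply derivable_continuous, derivable_id. }
  exists c. split; [exact P|]. unfold id in E.
  rewrite (derive_pt_eq_0 f c (df c) (prf c P)) in E by (apply is_derive_Reals, Hd, P).
  unfold prid in E. rewrite derive_pt_id in E. lra.
Qed.

Lemma is_derive_continuity_pt (f : R -> R) x l : is_derive f x l -> continuity_pt f x.
Proof. intro H. apply derivable_continuous_pt. exists l. apply is_derive_Reals, H. Qed.

Lemma continuity_pt_semicircle_pow_mult (F : R -> R) k c : -1 <= c <= 1 -> continuity_pt F c ->
  continuity_pt (fun x => semicircle x ^ k * F x) c.
Proof.
  intros Hc HF. apply (continuity_pt_mult (fun x => semicircle x ^ k) F); [|exact HF].
  apply (continuity_pt_comp semicircle (fun u => u ^ k)).
  - apply (continuity_pt_comp (fun x => 1 - x ^ 2) sqrt).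
    + apply (is_derive_continuity_pt _ c (-2 * c)). auto_derive; [easy | ring].
    + apply continuity_pt_sqrt. nra.
  - apply derivable_continuous_pt, derivable_pt_pow.
Qed.

Lemma cheb_deriv_pos_ge_1 n j x : (j <= n)%nat -> 1 <= x -> 0 < cheb_deriv n j x.
Proof.
  intro Hj. replace j with (n - (n - j))%nat by lia.
  generalize (n - j)%nat (Nat.le_sub_l n j). clear j Hj. intros i Hi. revert x.
  induction i as [|i IH]; intros x Hx.
  - rewrite Nat.sub_0_r, (cheb_deriv_diag_const n x 1). apply cheb_deriv_at_1_pos. lia.
  - pose proof (cheb_deriv_at_1_pos n (n - S i) ltac:(lia)).
    destruct (Req_dec x 1) as [->|E]; [assumption|].
    destruct (MVT_is_derive (cheb_deriv n (n - S i)) (cheb_deriv n (S (n - S i))) 1 x)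
      as (c & Hc & Ec); [lra | intros; apply is_derive_cheb_deriv
                        | intros; eapply is_derive_continuity_pt, is_derive_cheb_deriv |].
    replace (S (n - S i)) with (n - i)%nat in Ec by lia.
    assert (0 < cheb_deriv n (n - i) c) by (apply IH; lia || lra).
    assert (0 < cheb_deriv n (n - i) c * (x - 1)) by (apply Rmult_lt_0_compat; lra). lra.
Qed.

Section RightmostZero.

Variables (n k : nat) (w : R).
Hypothesis k_pos : (1 <= k)%nat.
Hypothesis k_lt_n : (k < n)%nat.
Hypothesis w_zero : cheb_deriv n (S k) w = 0.
Hypothesis w_rightmost : forall y, cheb_deriv n (S k) y = 0 -> y <= w.

Lemma w_nonneg : 0 <= w.
Proof.
  enough (- w <= w) by lra. apply w_rightmost.
  rewrite cheb_deriv_opp, w_zero. ring.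
Qed.

Lemma w_lt_1 : w < 1.
Proof.
  destruct (Rlt_or_le w 1) as [H|H]; [exact H|].
  pose proof (cheb_deriv_pos_ge_1 n (S k) w ltac:(lia) H). lra.
Qed.

Lemma cheb_deriv_pos_right t : w < t -> 0 < cheb_deriv n (S k) t.
Proof.
  intro Ht. destruct (Rlt_or_le t 1) as [Ht1|Ht1]; [|apply cheb_deriv_pos_ge_1; lia || lra].
  destruct (Rlt_or_le 0 (cheb_deriv n (S k) t)) as [P|P]; [exact P|]. exfalso.
  destruct (Req_dec (cheb_deriv n (S k) t) 0) as [E|E]; [apply w_rightmost in E; lra|].
  destruct (IVT (cheb_deriv n (S k)) t 1) as (z & Hz & Ez).
  - intro. eapply is_derive_continuity_pt, is_derive_cheb_deriv.
  - exact Ht1.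
  - lra.
  - apply cheb_deriv_pos_ge_1; lia || lra.
  - apply w_rightmost in Ez. lra.
Qed.

Let y (x : R) : R := cheb_deriv n (S k) x.

Definition sonin_g (x : R) : R := (1 - x ^ 2) * cheb_deriv n (S (S k)) x - (INR k + 1) * x * y x.
Definition sonin_phi (x : R) : R := semicircle x ^ k * sonin_g x.
Definition sonin_h (x : R) : R := semicircle x ^ S k * y x.

Lemma is_derive_sonin_g x : is_derive sonin_g x
  (-2 * x * cheb_deriv n (S (S k)) x + (1 - x ^ 2) * cheb_deriv n (S (S (S k))) x
   - (INR k + 1) * (1 * y x + x * cheb_deriv n (S (S k)) x)).
Proof.
  apply is_derive_Rminus.
  - apply is_derive_c_minus_sq_mult, is_derive_cheb_deriv.
  - apply (is_derive_Rext (fun t => (INR k + 1) * (t * y t))); [intro; ring|].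
    apply is_derive_Rscal, is_derive_Rmult; [auto_derive; easy | apply is_derive_cheb_deriv].
Qed.

Let sonin_dphi (x : R) : R :=
  semicircle x ^ pred k / semicircle x * y x * (INR k * (INR k + 1) - INR n ^ 2 * (1 - x ^ 2)).

Lemma is_derive_sonin_phi x : -1 < x < 1 -> is_derive sonin_phi x (sonin_dphi x).
Proof.
  intro Hx. pose proof (semicircle_pos x Hx) as Hs. pose proof (semicircle_sq x ltac:(lra)) as Hs2.
  eapply is_derive_eq.
  - apply is_derive_Rmult; [apply is_derive_pow, is_derive_semicircle, Hx | apply is_derive_sonin_g].
  - pose proof (cheb_deriv_eq n (S k) x) as E. unfold deriv_eq in E. unfold sonin_dphi, sonin_g, y.
    replace (semicircle x ^ k) with (semicircle x ^ pred k * semicircle x)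
      by (destruct k; [lia|]; simpl; ring).
    replace ((1 - x ^ 2) * cheb_deriv n (S (S (S k))) x)
      with ((2 * INR (S k) + 1) * x * cheb_deriv n (S (S k)) x
            - (INR n ^ 2 - INR (S k) ^ 2) * cheb_deriv n (S k) x) by lra.
    set (s := semicircle x) in *. set (P := s ^ pred k). rewrite S_INR.
    field_simplify_eq; [|lra]. rewrite Hs2. ring.
Qed.

Lemma is_derive_sonin_h x : -1 < x < 1 -> is_derive sonin_h x (semicircle x ^ k / semicircle x * sonin_g x).
Proof.
  intro Hx. pose proof (semicircle_pos x Hx) as Hs. pose proof (semicircle_sq x ltac:(lra)) as Hs2.
  eapply is_derive_eq.
  - apply is_derive_Rmult; [apply is_derive_pow, is_derive_semicircle, Hx | apply is_derive_cheb_deriv].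
  - unfold sonin_g, y. simpl pred. rewrite S_INR.
    set (s := semicircle x) in *. replace (s ^ S k) with (s ^ k * s) by (simpl; ring). set (P := s ^ k).
    field_simplify_eq; [|lra]. rewrite Hs2. ring.
Qed.

Lemma sonin_g_neg : xk n k <= w -> forall t, w <= t < 1 -> sonin_g t < 0.
Proof.
  intros Hxw t Ht. pose proof w_nonneg. pose proof w_lt_1.
  pose proof (xk_sq n k ltac:(lia)) as X2. pose proof (xk_range n k ltac:(lia)).
  assert (Hn : 0 < INR n) by (apply lt_0_INR; lia). assert (Hk : 0 < INR k) by (apply lt_0_INR; lia).
  assert (phi_incr : forall c, w < c < 1 -> 0 < sonin_dphi c).
  { intros c Hc. unfold sonin_dphi. pose proof (semicircle_pos c ltac:(lra)).
    assert (INR n ^ 2 * (1 - c ^ 2) < INR k ^ 2).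
    { assert (Hc2 : 1 - c ^ 2 < INR k ^ 2 / INR n ^ 2) by nra.
      apply (Rmult_lt_compat_l (INR n ^ 2)) in Hc2; [|nra]. field_simplify in Hc2; lra. }
    apply Rmult_lt_0_compat; [apply Rmult_lt_0_compat|nra].
    - apply Rdiv_lt_0_compat; [apply pow_lt|]; lra.
    - apply cheb_deriv_pos_right. lra. }
  assert (phi_cont : forall c, t <= c <= 1 -> continuity_pt sonin_phi c).
  { intros c Hc. apply continuity_pt_semicircle_pow_mult; [lra|].
    eapply is_derive_continuity_pt, is_derive_sonin_g. }
  destruct (MVT_is_derive sonin_phi sonin_dphi t 1) as (c & Hc & Ec);
    [lra | intros; apply is_derive_sonin_phi; lra | exact phi_cont |].
  assert (sonin_phi 1 = 0) by (unfold sonin_phi; rewrite semicircle_1, pow_i by lia; ring).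
  pose proof (phi_incr c ltac:(lra)).
  assert (sonin_phi t < 0) by nra.
  unfold sonin_phi in *. pose proof (pow_lt _ k (semicircle_pos t ltac:(lra))).
  destruct (Rlt_or_le (sonin_g t) 0); [assumption | nra].
Qed.

Lemma w_lt_xk : w < xk n k.
Proof.
  destruct (Rlt_or_le w (xk n k)) as [L|L]; [exact L|]. exfalso.
  pose proof w_nonneg. pose proof w_lt_1.
  set (t := (w + 1) / 2). assert (Ht : w < t < 1) by (unfold t; lra). clearbody t.
  assert (h_cont : forall c, w <= c <= t -> continuity_pt sonin_h c).
  { intros c Hc. apply continuity_pt_semicircle_pow_mult; [lra|].
    eapply is_derive_continuity_pt, is_derive_cheb_deriv. }
  destruct (MVT_is_derive sonin_h (fun c => semicircle c ^ k / semicircle c * sonin_g c) w t)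
    as (c & Hc & Ec); [lra | intros; apply is_derive_sonin_h; lra | exact h_cont |].
  assert (sonin_g c < 0) by (apply sonin_g_neg; lra).
  assert (0 < semicircle c ^ k / semicircle c)
    by (pose proof (semicircle_pos c ltac:(lra)); apply Rdiv_lt_0_compat; [apply pow_lt|]; lra).
  assert (sonin_h w = 0) by (unfold sonin_h, y; rewrite w_zero; ring).
  assert (0 < sonin_h t).
  { apply Rmult_lt_0_compat; [apply pow_lt, semicircle_pos; lra | apply cheb_deriv_pos_right; lra]. }
  assert (semicircle c ^ k / semicircle c * sonin_g c < 0) by nra.
  cbv beta in Ec. nra.
Qed.

End RightmostZero.

Lemma delta_sq_Ank_Bnk n k : (1 <= k <= n)%nat -> delta n k ^ 2 = Ank n k * Bnk n k.
Proof.
  intro Hk. pose proof (cheb_deriv_at_1_pos n k ltac:(lia)).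
  rewrite delta_sq, energy_at_xk by exact Hk. field. lra.
Qed.

Lemma tau_sq_lt_delta_sq n k w : (1 <= k)%nat -> (k < n)%nat -> is_rightmost_zero n k w ->
  tau n k w ^ 2 < delta n k ^ 2.
Proof.
  intros Hk Hkn [Hw0 Hwr]. rewrite chebD_cheb_deriv in Hw0.
  assert (Hwr' : forall y, cheb_deriv n (S k) y = 0 -> y <= w)
    by (intros y Hy; apply Hwr; now rewrite chebD_cheb_deriv).
  assert (0 <= w) by (eapply w_nonneg; eassumption).
  assert (w < xk n k) by (eapply w_lt_xk; eassumption).
  pose proof (xk_range n k ltac:(lia)). pose proof (cheb_deriv_at_1_pos n k ltac:(lia)).
  rewrite delta_sq. unfold tau. rewrite !chebD_cheb_deriv. unfold Rdiv.
  rewrite Rpow_mult_distr, pow2_abs, pow_inv.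
  apply Rmult_lt_compat_r; [apply Rinv_0_lt_compat, pow_lt; lra|].
  apply Rle_lt_trans with (energy n k w).
  { unfold energy. pose proof (pow2_ge_0 (Derive_n (chebS n) k w)). lra. }
  rewrite !(energy_eq_poly n ltac:(lia)) by lra. apply energy_poly_lt; [lia | nra].
Qed.

Theorem lemma4p4 (n k : nat) (w : R) :
  (1 <= k)%nat -> (k + 2 <= n)%nat -> is_rightmost_zero n k w ->
  (tau n k w) ^ 2 < (delta n k) ^ 2 /\
  (delta n k) ^ 2 = Ank n k * Bnk n k /\
  Ank n k <= / 2 * (INR (Factorial.fact (2 * k)) / (INR k) ^ (2 * k)) /\
  Bnk n k = (INR (n + k) / INR n) *
            ((INR n) ^ (2 * k) * INR (Factorial.fact (n - k)) / INR (Factorial.fact (n + k))).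
Proof.
  intros Hk Hkn Hw. assert (Hk' : (1 <= k <= n)%nat) by lia.
  split; [|split; [|split]].
  - apply tau_sq_lt_delta_sq; [exact Hk | lia | exact Hw].
  - apply delta_sq_Ank_Bnk, Hk'.
  - apply Ank_bound, Hk'.
  - apply Bnk_factorial, Hk'.
Qed.
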